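(* Let $r\ge 3$, $t\ge 2$, and let $G$ be a connected simple $(r+1)$-regular graph with $N$ vertices and girth at least $t+1$. Let $\mathcal{C}$ be the binary code whose parity-check matrix is the vertex–edge incidence matrix of $G$ over $\mathbb{F}_2$ (an $(n,k,r,t)_{\mathrm{seq}}$ code with $n=N(r+1)/2$). Then $\mathcal{C}$ attains equality in the rate bound, i.e. $\frac{k}{n}=\frac{r^{s+1}}{r^{s+1}+2\sum_{i=0}^{s}r^i}$ for $t$ even and $\frac{k}{n}=\frac{r^{s+1}}{r^{s+1}+2\sum_{i=1}^{s}r^i+1}$ for $t$ odd, where $s=\lfloor(t-1)/2\rfloor$, if and only if $G$ is a Moore graph.
   Context: For integers $r\ge1$, $t\ge2$ define $N_{r,t}=1+\sum_{i=0}^{s}(r+1)r^i$ if $t=2s+2$ is even and $N_{r,t}=2\sum_{i=0}^{s}r^i$ if $t=2s+1$ is odd. A Moore graph (for $r,t$) is an $(r+1)$-regular graph of girth at least $t+1$ with exactly $N_{r,t}$ vertices. An $(n,k,r,t)_{\mathrm{seq}}$ code is an $[n,k]$ linear code $\mathcal{C}\subseteq\mathbb{F}_q^n$ such that for every $E\subseteq[n]$ with $1\le|E|=u\le t$ there is an ordering $\ell_1,\dots,\ell_u$ of $E$ and sets $R_j\subseteq[n]$, $|R_j|\le r$, $R_j\cap\{\ell_j,\dots,\ell_u\}=\emptyset$, with coefficients $a_{j,i}$ such that $c_{\ell_j}=\sum_{i\in R_j}a_{j,i}c_i$ for all $c\in\mathcal{C}$. *)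

From HB Require Import structures.
From mathcomp Require Import all_boot all_order all_algebra.
Set Implicit Arguments. Unset Strict Implicit. Unset Printing Implicit Defensive.
Import GRing.Theory Num.Theory.

Section Graphs.
Variables (V : finType) (adj : rel V).

(* simple graph: adj symmetric and irreflexive (hypotheses of the theorem) *)
Definition connected_graph : Prop := forall x y : V, connect adj x y.

Definition regular_graph (d : nat) : Prop :=
  forall x : V, #|[set y | adj x y]| = d.

Definition is_cycle (p : seq V) : bool := [&& uniq p, 3 <= size p & cycle adj p].

Definition girth_ge (g : nat) : Prop :=
  forall p : seq V, is_cycle p -> g <= size p.

Definition edges : {set {set V}} :=
  [set e : {set V} | [exists x, exists y, adj x y && (e == [set x; y])]].

Definition incidence : 'M['F_2]_(#|V|, #|edges|) :=
  \matrix_(i < #|V|, j < #|edges|) (((enum_val i \in enum_val j) : nat)%:R)%R.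

(* the code C = {c in F_2^n | H c^T = 0}, as the row space of kermx H^T *)
Definition code_length : nat := #|edges|.
Definition code_dim : nat := \rank (kermx (incidence^T)).
End Graphs.

Definition moore_number (r t : nat) : nat :=
  let s := (t - 1) %/ 2 in
  if odd t then 2 * \sum_(0 <= i < s.+1) r ^ i
  else 1 + \sum_(0 <= i < s.+1) (r + 1) * r ^ i.

Definition moore_graph (V : finType) (adj : rel V) (r t : nat) : Prop :=
  regular_graph adj r.+1 /\ girth_ge adj t.+1 /\ #|V| = moore_number r t.

Definition rate_bound (r t : nat) : rat :=
  let s := ((t - 1) %/ 2)%N in
  let num : rat := ((r ^ s.+1)%N%:R)%R in
  if odd t then
    (num / (num + 2%:R * (\sum_(1 <= i < s.+1) r ^ i)%N%:R + 1))%R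
  else
    (num / (num + 2%:R * (\sum_(0 <= i < s.+1) r ^ i)%N%:R))%R.

From HB Require Import structures.
From mathcomp Require Import all_boot all_order all_algebra.
From mathcomp Require Import ring lra zify.
Import Order.TTheory GRing.Theory Num.Theory.

(** Over F_2 every column of the incidence matrix H of a graph has exactly two
    ones, so a vector u with u H = 0 is constant along edges; for a connected
    graph the left kernel of H is thus spanned by the all-ones vector and
    rank H = N - 1.  Hence k = n - N + 1, and with n = N (r + 1) / 2 the rate
    k / n equals (N (r - 1) + 2) / (N (r + 1)), an injective function of N.
    The rate bound is the value of this function at the Moore number, so
    equality holds exactly when N is the Moore number.  The girth hypothesis
    only enters through the definition of a Moore graph. *)

Lemma geometric_sumn (r s : nat) :
  ((\sum_(0 <= i < s.+1) r ^ i) * r + 1 = \sum_(0 <= i < s.+1) r ^ i + r ^ s.+1)%N.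
Proof.
elim: s => [|s IHs]; first by rewrite big_nat1 expn0 expn1 mul1n addnC.
rewrite big_nat_recr //= mulnDl -addnA [(_ * r + 1)%N]addnC addnA IHs.
by rewrite -expnSr.
Qed.

Lemma moore_number_gt0 (r t : nat) : (0 < moore_number r t)%N.
Proof.
rewrite /moore_number; case: ifP => _ //.
by rewrite big_nat_recl // expn0 muln_gt0 addSn.
Qed.

Local Open Scope ring_scope.

Definition regular_code_rate (r N : nat) : rat :=
  (N%:R * (r%:R - 1) + 2) / (N%:R * (r%:R + 1)).

Lemma regular_code_rate_gt0 (r N : nat) :
  (0 < r)%N -> (0 < N)%N -> 0 < regular_code_rate r N.
Proof.
move=> r_gt0 N_gt0; have rq : 1 <= r%:R :> rat by rewrite ler1n.
have Nq : 1 <= N%:R :> rat by rewrite ler1n.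
by rewrite divr_gt0 //; nra.
Qed.

Lemma eq_regular_code_rate (r N M : nat) : (0 < r)%N -> (0 < M)%N ->
  regular_code_rate r N = regular_code_rate r M <-> N = M.
Proof.
move=> r_gt0 M_gt0; split=> [|-> //].
have rq : 1 <= r%:R :> rat by rewrite ler1n.
have Mq : 1 <= M%:R :> rat by rewrite ler1n.
case: (posnP N) => [->|N_gt0].
  (* regular_code_rate r 0 = 2 / 0 = 0 *)
  rewrite {1}/regular_code_rate !mul0r invr0 mulr0 => rate0.
  by have := @regular_code_rate_gt0 r M r_gt0 M_gt0; rewrite -rate0 ltxx.
have Nq : 1 <= N%:R :> rat by rewrite ler1n.
move/eqP; rewrite eqr_div; [|apply/lt0r_neq0; nra..].
rewrite -subr_eq0.
have -> : (N%:R * (r%:R - 1) + 2) * (M%:R * (r%:R + 1))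
          - (M%:R * (r%:R - 1) + 2) * (N%:R * (r%:R + 1))
          = 2 * (r%:R + 1) * (M%:R - N%:R) :> rat by ring.
rewrite !mulf_eq0 subr_eq0 eqr_nat => /orP[/orP[//|]|/eqP //].
by rewrite natr1 pnatr_eq0.
Qed.

Lemma rate_bound_moore (r t : nat) : (0 < r)%N ->
  rate_bound r t = regular_code_rate r (moore_number r t).
Proof.
move=> r_gt0; rewrite /rate_bound /moore_number /regular_code_rate.
set s := ((t - 1) %/ 2)%N.
have geo := geometric_sumn r s.
set S := (\sum_(0 <= i < s.+1) r ^ i)%N in geo *.
have S_gt0 : (0 < S)%N by rewrite /S big_nat_recl // expn0.
set p := (r ^ s.+1)%N in geo *.
have pq : p%:R = S%:R * r%:R + 1 - S%:R :> rat.
  have -> : S%:R * r%:R + 1 = (p + S)%:R :> rat by rewrite -natrM natr1 -addn1 geo addnC.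
  by rewrite natrD addrK.
have Sq : 1 <= S%:R :> rat by rewrite ler1n.
have rq : 1 <= r%:R :> rat by rewrite ler1n.
case: ifP => _.
- have -> : (\sum_(1 <= i < s.+1) r ^ i = S - 1)%N.
    by rewrite /S [in RHS]big_ltn // expn0 addnC addnK.
  rewrite natrB // natrM; apply/eqP; rewrite eqr_div; last first.
  + by rewrite mulf_neq0 //; apply/lt0r_neq0; lra.
  + by apply/lt0r_neq0; rewrite pq; nra.
  by apply/eqP; rewrite pq; ring.
- rewrite -big_distrr /= natrD natrM; apply/eqP; rewrite eqr_div; last first.
  + by rewrite mulf_neq0 //; apply/lt0r_neq0; nra.
  + by apply/lt0r_neq0; rewrite pq; nra.
  by apply/eqP; rewrite pq; ring.
Qed.

Section IncidenceCode.
Variables (V : finType) (adj : rel V).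
Hypotheses (adj_sym : symmetric adj) (adj_irr : irreflexive adj).

Lemma edge_adj {x y : V} : adj x y -> [set x; y] \in edges adj.
Proof.
by move=> xy; rewrite inE; apply/existsP; exists x; apply/existsP; exists y; rewrite xy eqxx.
Qed.

Lemma card_edge (e : {set V}) : e \in edges adj -> #|e| = 2%N.
Proof.
rewrite inE => /existsP[x /existsP[y /andP[xy /eqP ->]]].
by rewrite cards2; case: eqP => // exy; rewrite exy adj_irr in xy.
Qed.

Lemma card_edges_at (v : V) :
  #|[set e in edges adj | v \in e]| = #|[set y | adj v y]|.
Proof.
have -> : [set e in edges adj | v \in e] = [set [set v; y] | y in [set y | adj v y]].
  apply/setP => e; rewrite inE; apply/andP/imsetP.
  - rewrite inE; case=> /existsP[x /existsP[y /andP[xy /eqP ->]]].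
    rewrite !inE => /orP[] /eqP ->; first by exists y; rewrite ?inE.
    by exists x; [rewrite inE adj_sym | rewrite setUC].
  - by case=> y; rewrite inE => vy ->; rewrite edge_adj // !inE eqxx.
rewrite card_in_imset // => y y'; rewrite !inE => vy _ eq_vy.
have : y \in [set v; y] by rewrite !inE eqxx orbT.
rewrite eq_vy !inE => /orP[/eqP yv|/eqP //].
by rewrite yv adj_irr in vy.
Qed.

Lemma card_edges_regular {d : nat} :
  regular_graph adj d -> (#|edges adj| * 2 = #|V| * d)%N.
Proof.
move=> reg; rewrite -!sum1_card !big_distrl /=.
rewrite (eq_bigr (fun e : {set V} => \sum_(v in e) 1)%N); last first.
  by move=> e /card_edge; rewrite mul1n sum1_card.
rewrite (exchange_big_dep predT) //=; apply: eq_bigr => v _.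
rewrite mul1n -(reg v) -card_edges_at -sum1_card.
by apply: eq_bigl => e; rewrite inE andbC.
Qed.

Lemma mul_incidence (u : 'rV['F_2]_#|V|) (j : 'I_#|edges adj|) :
  (u *m incidence adj) 0 j = \sum_(v in enum_val j) u 0 (enum_rank v).
Proof.
rewrite !mxE (reindex (@enum_rank V)) /=; last exact/onW_bij/enum_rank_bij.
rewrite [RHS]big_mkcond; apply: eq_bigr => v _; rewrite mxE enum_rankK.
by case: (v \in enum_val j); rewrite ?mulr1 ?mulr0.
Qed.

Lemma incidence_left_kernel_const (u : 'rV['F_2]_#|V|) :
  connected_graph adj -> u *m incidence adj = 0 ->
  forall x y, u 0 (enum_rank x) = u 0 (enum_rank y).
Proof.
move=> conn uH0.
have edge_const x y : adj x y -> u 0 (enum_rank x) = u 0 (enum_rank y).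
  move=> xy; have xy_edge := edge_adj xy.
  move/matrixP: uH0 => /(_ 0 (enum_rank_in xy_edge [set x; y])).
  rewrite mul_incidence enum_rankK_in // mxE big_setU1 /=; last first.
    by rewrite inE; apply: contraL xy => /eqP ->; rewrite adj_irr.
  by rewrite big_set1 => /eqP; rewrite addr_eq0 oppr_pchar2 ?pchar_Fp // => /eqP.
move=> x y; case/connectP: (conn x y) => p.
elim: p x => [|z p IHp] x /=; first by move=> _ ->.
by case/andP=> xz zp yp; rewrite (edge_const _ _ xz) (IHp z).
Qed.

Lemma rank_kermx_incidence : connected_graph adj -> (0 < #|V|)%N ->
  \rank (kermx (incidence adj)) = 1%N.
Proof.
move=> conn V_gt0; set ones := const_mx 1 : 'rV['F_2]_#|V|.
have ones_ker : (ones <= kermx (incidence adj))%MS.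
  apply/sub_kermxP/rowP => j; rewrite mul_incidence mxE.
  under eq_bigr do rewrite mxE.
  by rewrite sumr_const card_edge ?enum_valP // -mulr_natr mul1r pchar_Fp_0.
have ker_ones : (kermx (incidence adj) <= ones)%MS.
  apply/row_subP => i; set w := row i _.
  have wH0 : w *m incidence adj = 0 by apply/sub_kermxP; exact: row_sub.
  clearbody w.
  have x0 : 'I_#|V| := Ordinal V_gt0.
  have -> : w = w 0 x0 *: ones.
    apply/rowP => j; rewrite !mxE mulr1 -(enum_valK j) -(enum_valK x0).
    exact: incidence_left_kernel_const.
  exact: scalemx_sub.
have ones_neq0 : ones != 0.
  by apply/eqP => /rowP /(_ (Ordinal V_gt0)); rewrite !mxE => /eqP; rewrite oner_eq0.
have ker_eq : (kermx (incidence adj) == ones)%MS by apply/andP.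
by rewrite (eqmxP ker_eq) rank_rV ones_neq0.
Qed.

Lemma code_dim_add_card : connected_graph adj -> (0 < #|V|)%N ->
  (code_dim adj + #|V| = code_length adj + 1)%N.
Proof.
move=> conn V_gt0; rewrite /code_dim /code_length mxrank_ker mxrank_tr.
have := rank_kermx_incidence conn V_gt0; rewrite mxrank_ker.
have := rank_leq_col (incidence adj); have := rank_leq_row (incidence adj).
lia.
Qed.

Lemma code_rate_regular (r : nat) :
  connected_graph adj -> regular_graph adj r.+1 ->
  (code_dim adj)%:R / (code_length adj)%:R = regular_code_rate r #|V|.
Proof.
move=> conn reg.
have handshake : (code_length adj * 2 = #|V| * r.+1)%N := card_edges_regular reg.
rewrite /regular_code_rate; case: (posnP #|V|) => [N0|N_gt0].
  (* for the empty graph both sides are _ / 0 = 0 *)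
  have -> : code_length adj = 0%N by move: handshake; rewrite N0; lia.
  by rewrite N0 !mul0r !invr0 !mulr0.
have dim := code_dim_add_card conn N_gt0.
set k := code_dim adj in dim *; set n := code_length adj in dim handshake *.
set N := #|V| in dim handshake N_gt0 *.
have kq : k%:R = n%:R + 1 - N%:R :> rat by rewrite natr1 -addn1 -dim natrD addrK.
have nq : N%:R * (r%:R + 1) = 2 * n%:R :> rat.
  by rewrite natr1 -!natrM -handshake mulnC.
have Nq : 1 <= N%:R :> rat by rewrite ler1n.
have rq : 0 <= r%:R :> rat by [].
apply/eqP; rewrite eqr_div; [|apply/lt0r_neq0; nra..].
rewrite nq kq; apply/eqP.
have -> : (N%:R * (r%:R - 1) + 2) * n%:R
          = (n%:R + 1 - N%:R) * (2 * n%:R) + n%:R * (N%:R * (r%:R + 1) - 2 * n%:R) :> rat.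
  by ring.
by rewrite nq subrr mulr0 addr0.
Qed.

End IncidenceCode.

Theorem mainTheorem8 (V : finType) (adj : rel V) (r t : nat) :
  symmetric adj -> irreflexive adj ->
  (3 <= r)%N -> (2 <= t)%N ->
  connected_graph adj -> regular_graph adj r.+1 -> girth_ge adj t.+1 ->
  (((code_dim adj)%:R / (code_length adj)%:R)%R = rate_bound r t :> rat)
    <-> moore_graph adj r t.
Proof.
move=> adj_sym adj_irr r_ge3 _ conn reg girth.
have r_gt0 : (0 < r)%N by apply: leq_trans r_ge3.
rewrite (@code_rate_regular V adj adj_sym adj_irr r conn reg) rate_bound_moore //.
rewrite eq_regular_code_rate ?moore_number_gt0 //.
by split=> [N_moore | [_ [_ ->]]].
Qed.
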